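(* Let $n$ be a natural number, let $g,d$ be annotated terms, and let $M$ be a correct memo map. Write $(b,M'')=\mathrm{decideMemo}(n,g,d,M)$. Then: 1. $M''$ is a correct memo map; and 2. if $b=\mathrm{true}$, then there exists a natural number $k$ with $\mathrm{decide}(k,g,d)=\mathrm{true}$.
   Context: Terms are generated by the grammar $t ::= \mathrm{Var}(k) \mid \mathrm{Meet}(t,t) \mid \mathrm{Join}(t,t) \mid \mathrm{Not}(t)$, where $k$ ranges over positive integers. An annotated term is either $N$, $L\,t$ or $R\,t$ for a term $t$. The fuel-bounded proof-search function $\mathrm{decide}(n,g,d)\in\{\mathrm{true},\mathrm{false}\}$ is defined recursively. First, $\mathrm{decide}(0,g,d)=\mathrm{false}$. Second, $\mathrm{decide}(n+1,g,d)=\mathrm{true}$ iff at least one of the following holds, where every recursive call uses fuel $n$: - $g=L\,\mathrm{Var}(a)$ and $d=R\,\mathrm{Var}(a)$; - $\mathrm{decide}(n,g,N)$; - $d=N$ and $\mathrm{decide}(n,g,g)$; - $g=L\,\mathrm{Meet}(a,b)$ and $\mathrm{decide}(n,L\,a,d)$; - $g=L\,\mathrm{Meet}(a,b)$ and $\mathrm{decide}(n,L\,b,d)$; - $g=L\,\mathrm{Join}(a,b)$ and both $\mathrm{decide}(n,L\,a,d)$ and $\mathrm{decide}(n,L\,b,d)$; - $g=L\,\mathrm{Not}(a)$ and $\mathrm{decide}(n,R\,a,d)$; - $g=R\,\mathrm{Join}(a,b)$ and $\mathrm{decide}(n,R\,a,d)$; - $g=R\,\mathrm{Join}(a,b)$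 and $\mathrm{decide}(n,R\,b,d)$; - $g=R\,\mathrm{Meet}(a,b)$ and both $\mathrm{decide}(n,R\,a,d)$ and $\mathrm{decide}(n,R\,b,d)$; - $g=R\,\mathrm{Not}(a)$ and $\mathrm{decide}(n,L\,a,d)$; - $\mathrm{decide}(n,d,g)$. A memo map is a finite partial function $M$ from pairs of annotated terms to $\{\mathrm{true},\mathrm{false}\}$. The memo map $M$ is correct if for every pair $(g',d')$ with $M(g',d')=\mathrm{true}$ there exists $k$ with $\mathrm{decide}(k,g',d')=\mathrm{true}$. In particular, the empty map is correct. The memoized search $\mathrm{decideMemo}(n,g,d,M)$ returns a pair consisting of a boolean and a memo map, and is defined as follows. - If $M(g,d)$ is defined and equal to $b$, it returns $(b,M)$. - Otherwise it computes a pair $(b,M')$ and returns $(b,M'[(g,d)\mapsto b])$. Here $M'[(g,d)\mapsto b]$ is $M'$ updated so that $(g,d)$ is mapped to $b$. The pair $(b,M')$ is computed as follows. - If $n=0$, then $(b,M')=(\mathrm{false},M)$. - If $n=m+1$, it is obtained by evaluating the same disjunction of cases as in the definition of $\mathrm{decide}(m+1,g,d)$, in the same order. Each recursive call $\mathrm{decide}(m,g_1,d_1)$ is replaced by $\mathrm{decideMemo}(m,g_1,d_1,\cdot)$, and the memo map is threaded sequentially as follows: - A case whose pattern condition on $g,d$ fails yields $(\mathrm{false},\text{current map})$. - For a disjunction $A\vee B$: run $A$ on the current map, getting $(x,M_1)$. If $x=\mathrm{true}$, the result is $(\mathrm{true},M_1)$; otherwise the result is that of running $B$ on $M_1$. -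 For a conjunction $A\wedge B$: run $A$ on the current map, getting $(x,M_1)$. If $x=\mathrm{false}$, the result is $(\mathrm{false},M_1)$; otherwise the result is that of running $B$ on $M_1$. *)

From Stdlib Require Import PArith List Bool.
Import ListNotations.

Inductive term : Type :=
| Var : positive -> term
| Meet : term -> term -> term
| Join : term -> term -> term
| Not : term -> term.

Inductive aterm : Type :=
| N : aterm
| L : term -> aterm
| R : term -> aterm.

Definition term_eq_dec : forall x y : term, {x = y} + {x <> y}.
Proof. decide equality; apply Pos.eq_dec. Defined.

Definition aterm_eq_dec : forall x y : aterm, {x = y} + {x <> y}.
Proof. decide equality; apply term_eq_dec. Defined.

Definition pair_eq_dec : forall x y : aterm * aterm, {x = y} + {x <> y}.
Proof. decide equality; apply aterm_eq_dec. Defined.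

Fixpoint decide (n : nat) (g d : aterm) : bool :=
  match n with
  | O => false
  | S m =>
      (match g, d with
       | L (Var a), R (Var b) => if Pos.eq_dec a b then true else false
       | _, _ => false end)
      || decide m g N
      || (match d with N => decide m g g | _ => false end)
      || (match g with L (Meet a b) => decide m (L a) d | _ => false end)
      || (match g with L (Meet a b) => decide m (L b) d | _ => false end)
      || (match g with L (Join a b) => decide m (L a) d && decide m (L b) d
                  | _ => false end)
      || (match g with L (Not a) => decide m (R a) d | _ => false end)
      || (match g with R (Join a b) => decide m (R a) d | _ => false end)
      || (match g with R (Join a b) => decide m (R b) d | _ => false end)
      || (match g with R (Meet a b) => decide m (R a) d && decide m (R b) d
                  | _ => false end)
      || (match g with R (Not a) => decide m (L a) d | _ => false end)
      || decide m d g
  end.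

(* Memo maps: finite partial functions from pairs of annotated terms to bool,
   represented as association lists (the first binding for a key wins). *)
Definition memo := list ((aterm * aterm) * bool).

Fixpoint lookup (M : memo) (k : aterm * aterm) : option bool :=
  match M with
  | [] => None
  | (k', v) :: M' => if pair_eq_dec k k' then Some v else lookup M' k
  end.

Definition update (M : memo) (k : aterm * aterm) (b : bool) : memo := (k, b) :: M.

Definition memo_correct (M : memo) : Prop :=
  forall g' d', lookup M (g', d') = Some true -> exists k, decide k g' d' = true.

Definition por (A B : memo -> bool * memo) (M : memo) : bool * memo :=
  let (x, M1) := A M in if x then (true, M1) else B M1.

Definition pand (A B : memo -> bool * memo) (M : memo) : bool * memo :=
  let (x, M1) := A M in if x then B M1 else (false, M1).

Definition pfail (M : memo) : bool * memo := (false, M).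

Fixpoint decideMemo (n : nat) (g d : aterm) (M : memo) {struct n} : bool * memo :=
  match lookup M (g, d) with
  | Some b => (b, M)
  | None =>
      let '(b, M') :=
        match n with
        | O => (false, M)
        | S m =>
            let rec := fun g1 d1 M0 => decideMemo m g1 d1 M0 in
            por (fun M0 => match g, d with
                           | L (Var a), R (Var b) =>
                               if Pos.eq_dec a b then (true, M0) else (false, M0)
                           | _, _ => (false, M0) end)
            (por (rec g N)
            (por (match d with N => rec g g | _ => pfail end)
            (por (match g with L (Meet a b) => rec (L a) d | _ => pfail end)
            (por (match g with L (Meet a b) => rec (L b) d | _ => pfail end)
            (por (match g with L (Join a b) => pand (rec (L a) d) (rec (L b) d)
                              | _ => pfail end)
            (por (match g with L (Not a) => rec (R a) d | _ => pfail end)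
            (por (match g with R (Join a b) => rec (R a) d | _ => pfail end)
            (por (match g with R (Join a b) => rec (R b) d | _ => pfail end)
            (por (match g with R (Meet a b) => pand (rec (R a) d) (rec (R b) d)
                              | _ => pfail end)
            (por (match g with R (Not a) => rec (L a) d | _ => pfail end)
                 (rec d g))))))))))) M
        end in
      (b, update M' (g, d) b)
  end.

(* The invariant "the memo map is correct" is preserved by every cache hit, by
   every rule of the search and by the sequential threading of maps through
   [por] and [pand]; a fresh [true] entry is justified by the rule that produced
   it.  A conjunctive rule joins two derivations of different fuel, which is
   possible because [decide] is monotone in its fuel. *)

From Stdlib Require Import PArith Bool Lia.

Definition derivable (g d : aterm) : Prop := exists k, decide k g d = true.

Lemma decide_mono k k' g d : k <= k' -> decide k g d = true -> decide k' g d = true.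
Proof.
  revert k' g d; induction k as [|k IH]; intros [|k'] g d Hle; try discriminate; [lia|].
  assert (IHk : forall g d, decide k g d = true -> decide k' g d = true)
    by (intros; apply IH; auto; lia).
  destruct g as [|[]|[]]; destruct d as [|[]|[]]; intros Hk; cbn [decide] in Hk |- *;
    rewrite ?orb_true_iff, ?andb_true_iff in Hk;
    repeat match goal with H : _ \/ _ |- _ => destruct H | H : _ /\ _ |- _ => destruct H end;
    repeat match goal with H : decide k _ _ = true |- _ => apply IHk in H end;
    repeat match goal with H : _ = true |- _ => rewrite H; clear H end;
    cbn [andb]; now rewrite ?orb_true_r, ?orb_true_l.
Qed.

Lemma derivable_of_premise g1 d1 g d :
  (forall k, decide k g1 d1 = true -> decide (S k) g d = true) ->
  derivable g1 d1 -> derivable g d.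
Proof. intros Hrule [k Hk]; exists (S k); auto. Qed.

Lemma derivable_of_premises g1 d1 g2 d2 g d :
  (forall k, decide k g1 d1 = true -> decide k g2 d2 = true -> decide (S k) g d = true) ->
  derivable g1 d1 -> derivable g2 d2 -> derivable g d.
Proof.
  intros Hrule [k1 Hk1] [k2 Hk2]; exists (S (Nat.max k1 k2)).
  apply Hrule; [apply (decide_mono k1) | apply (decide_mono k2)]; auto; lia.
Qed.

Lemma memo_correct_update M g d b :
  memo_correct M -> (b = true -> derivable g d) -> memo_correct (update M (g, d) b).
Proof.
  intros HM Hb g' d' Hlookup; cbn [update lookup] in Hlookup.
  destruct (pair_eq_dec (g', d') (g, d)) as [Heq|]; auto.
  injection Heq as -> ->; injection Hlookup; auto.
Qed.

Definition memo_sound (A : memo -> bool * memo) (P : Prop) : Prop :=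
  forall M, memo_correct M -> memo_correct (snd (A M)) /\ (fst (A M) = true -> P).

Lemma memo_sound_ret (b : bool) P : (b = true -> P) -> memo_sound (fun M => (b, M)) P.
Proof. split; auto. Qed.

Lemma memo_sound_fail P : memo_sound pfail P.
Proof. apply memo_sound_ret; discriminate. Qed.

Lemma memo_sound_weaken A P Q : memo_sound A P -> (P -> Q) -> memo_sound A Q.
Proof. intros HA HPQ M HM; destruct (HA M HM); auto. Qed.

Lemma memo_sound_por A B P : memo_sound A P -> memo_sound B P -> memo_sound (por A B) P.
Proof.
  intros HA HB M HM; unfold por.
  destruct (HA M HM) as [HM1 HP]; destruct (A M) as [[] M1]; auto.
Qed.

Lemma memo_sound_pand A B P1 P2 P :
  memo_sound A P1 -> memo_sound B P2 -> (P1 -> P2 -> P) -> memo_sound (pand A B) P.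
Proof.
  intros HA HB HP M HM; unfold pand.
  destruct (HA M HM) as [HM1 HP1]; destruct (A M) as [[] M1]; cbn in *.
  - destruct (HB M1 HM1); auto.
  - split; [assumption | discriminate].
Qed.

Lemma memo_sound_memoize g d (body : memo -> bool * memo) :
  memo_sound body (derivable g d) ->
  memo_sound (fun M => match lookup M (g, d) with
                       | Some b => (b, M)
                       | None => let '(b, M') := body M in (b, update M' (g, d) b)
                       end) (derivable g d).
Proof.
  intros Hbody M HM.
  destruct (lookup M (g, d)) as [b|] eqn:Hlookup; cbn.
  - split; [assumption|]; intros ->; exact (HM g d Hlookup).
  - destruct (Hbody M HM) as [HM' Hb]; destruct (body M) as [b M']; cbn in *.
    split; [apply memo_correct_update|]; auto.
Qed.

(* Rewriting the premises of a rule to [true] makes one disjunct of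
   [decide (S k) g d] true. *)
Ltac apply_rule :=
  intros k; cbn [decide]; intros ->; try intros ->; cbn [andb];
  now rewrite ?orb_true_r, ?orb_true_l.

Lemma decideMemo_sound n : forall g d, memo_sound (decideMemo n g d) (derivable g d).
Proof.
  induction n as [|n IH]; intros g d; apply memo_sound_memoize.
  - apply memo_sound_fail.
  - apply memo_sound_por.
    + destruct g as [|[a| | |]|]; destruct d as [| |[c| | |]]; try apply memo_sound_fail.
      destruct (Pos.eq_dec a c) as [<-|]; apply memo_sound_ret; [|discriminate].
      exists 1; cbn; now destruct (Pos.eq_dec a a).
    + repeat apply memo_sound_por;
        destruct g as [|[]|[]]; destruct d; cbv beta iota;
        first [ apply memo_sound_fail
              | eapply memo_sound_weaken;
                  [apply IH | apply derivable_of_premise; apply_rule]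
              | eapply memo_sound_pand;
                  [apply IH | apply IH | apply derivable_of_premises; apply_rule] ].
Qed.

Theorem mainTheorem3 (n : nat) (g d : aterm) (M : memo) :
  memo_correct M ->
  memo_correct (snd (decideMemo n g d M)) /\
  (fst (decideMemo n g d M) = true -> exists k, decide k g d = true).
Proof. exact (decideMemo_sound n g d M). Qed.
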